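(* In Model B below, assume $l\mid d$, $l\to\infty$ and $lp\to0$ as $d\to\infty$. Then for the $c$-segmentation rule with $c=d/l$, $$\mathbb{P}(w\text{ is misclassified})\to0\quad\text{as }d\to\infty.$$
   Context: Segmentation rule. Let $d,c$ be positive integers with $c\mid d$. For $x\in\mathbb{R}^d$ and $1\le j\le c$ let $x_j\in\mathbb{R}^{d/c}$ denote its $j$-th block $(x_{(j-1)d/c+1},\dots,x_{jd/c})$, so that $x=x_1\circ\cdots\circ x_c$ (concatenation). Given dictionary words $w^1,\dots,w^K\in\mathbb{R}^d$ ($w^k$ representing class $k$) and a test word $w\in\mathbb{R}^d$, for each $j$ let $U_j\in\{1,\dots,K\}$ be an index $k$ minimizing the Euclidean distance $\|w_j-w^k_j\|$ in $\mathbb{R}^{d/c}$, chosen uniformly at random among all minimizers (independently of everything else). The $c$-segmentation rule assigns to $w$ the class $\chi(w)\in\operatorname{argmax}_k\#\{j:U_j=k\}$, chosen uniformly at random among all maximizers. The case $c=1$ is the Euclidean (nearest-neighbour) rule and $c=d$ is coordinate-by-coordinate comparison. $w$ is classified correctly if $\chi(w)$ equals its true class, misclassified otherwise. Probabilities are over all random objects including tie-breaks. Model B. Let $d\ge1$, an integer $l\ge1$, $N>0$ and $p\in(0,1)$ be given (the last three may depend on $d$). Let $m_1=0\in\mathbb{R}^d$ and let $m_2\in\mathbb{R}^d$ have $(m_2)_i=1$ if $i\equiv1\pmod l$ and $(m_2)_i=0$ otherwise. Let $Y^{(0)},Y^{(1)},Y^{(2)}$ be independent random vectors in $\mathbb{R}^d$,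 each with i.i.d. coordinates satisfying $\mathbb{P}(Y_i=N)=p$, $\mathbb{P}(Y_i=0)=1-p$. There are $K=2$ classes; the dictionary words are $w^1=m_1+Y^{(1)}$ (class 1) and $w^2=m_2+Y^{(2)}$ (class 2), and the test word is $w=m_1+Y^{(0)}$ (true class 1). *)

From HB Require Import structures.
From mathcomp Require Import all_boot.
From Stdlib Require Import Reals.
Set Implicit Arguments. Unset Strict Implicit. Unset Printing Implicit Defensive.

Lemma Rplus_assoc' : associative Rplus.
Proof. by move=> x y z; rewrite Rplus_assoc. Qed.
Lemma Rmult_assoc' : associative Rmult.
Proof. by move=> x y z; rewrite Rmult_assoc. Qed.
HB.instance Definition _ := Monoid.isComLaw.Build R 0%R Rplus Rplus_assoc' Rplus_comm Rplus_0_l.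
HB.instance Definition _ := Monoid.isComLaw.Build R 1%R Rmult Rmult_assoc' Rmult_comm Rmult_1_l.

Definition Rleb (a b : R) : bool := if Rle_dec a b then true else false.

(* Euclidean distance between the j-th blocks (0-indexed, blocks of length
   d/c) of x and y in R^d; coordinate i (0-indexed) lies in block i / (d/c). *)
Definition block_dist (d c : nat) (x y : 'I_d -> R) (j : nat) : R :=
  sqrt (\big[Rplus/0%R]_(i : 'I_d | i %/ (d %/ c) == j) ((x i - y i) ^ 2)%R).

Definition block_minimizers (d c K : nat) (ws : 'I_K -> 'I_d -> R)
    (w : 'I_d -> R) (j : nat) : {set 'I_K} :=
  [set k | [forall k', Rleb (block_dist c w (ws k) j) (block_dist c w (ws k') j)]].

(* probability that the vector of block votes (U_1..U_c) equals u:
   each U_j is uniform among the minimizers, independently *)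
Definition prob_U (d c K : nat) (ws : 'I_K -> 'I_d -> R) (w : 'I_d -> R)
    (u : {ffun 'I_c -> 'I_K}) : R :=
  \big[Rmult/1%R]_(j < c)
     (if u j \in block_minimizers c ws w j
      then Rinv (INR #|block_minimizers c ws w j|) else 0)%R.

Definition votes (c K : nat) (u : {ffun 'I_c -> 'I_K}) (k : 'I_K) : nat :=
  #|[set j | u j == k]|.

Definition vote_maximizers (c K : nat) (u : {ffun 'I_c -> 'I_K}) : {set 'I_K} :=
  [set k | [forall k', votes u k' <= votes u k]].

(* probability that chi(w) = k given the block votes u (uniform tie-break) *)
Definition prob_chi_given (c K : nat) (u : {ffun 'I_c -> 'I_K}) (k : 'I_K) : R :=
  if k \in vote_maximizers u then Rinv (INR #|vote_maximizers u|) else 0%R.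

(* probability that the c-segmentation rule misclassifies w, whose true class
   is k0, given dictionary words ws (over the tie-break randomness only) *)
Definition seg_misclass_prob (d c K : nat) (ws : 'I_K -> 'I_d -> R)
    (w : 'I_d -> R) (k0 : 'I_K) : R :=
  \big[Rplus/0%R]_(u : {ffun 'I_c -> 'I_K})
     (prob_U ws w u * \big[Rplus/0%R]_(k | k != k0) prob_chi_given u k)%R.

(* Y encoded by a boolean vector: Y_i = N if b i, 0 otherwise *)
Definition Yvec (d : nat) (N : R) (b : {ffun 'I_d -> bool}) : 'I_d -> R :=
  fun i => if b i then N else 0%R.

Definition Yweight (d : nat) (p : R) (b : {ffun 'I_d -> bool}) : R :=
  \big[Rmult/1%R]_(i : 'I_d) (if b i then p else 1 - p)%R.

(* m_2: (m_2)_i = 1 iff i = 1 mod l for 1-indexed i, i.e. i0 mod l = 0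
   for the 0-indexed coordinate i0 *)
Definition m2 (d l : nat) : 'I_d -> R :=
  fun i => if i %% l == 0 then 1%R else 0%R.

Definition class1 : 'I_2 := ord0.
Definition class2 : 'I_2 := ord_max.

Definition modelB_misclass_prob (d l : nat) (N p : R) : R :=
  \big[Rplus/0%R]_(b0 : {ffun 'I_d -> bool})
  \big[Rplus/0%R]_(b1 : {ffun 'I_d -> bool})
  \big[Rplus/0%R]_(b2 : {ffun 'I_d -> bool})
    (Yweight p b0 * Yweight p b1 * Yweight p b2 *
     seg_misclass_prob (d %/ l)
       (fun k : 'I_2 => if k == class1 then Yvec N b1
                        else (fun i => m2 l i + Yvec N b2 i)%R)
       (Yvec N b0) class1)%R.

From HB Require Import structures.
From mathcomp Require Import all_boot.
From Stdlib Require Import Reals Lra Lia.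
From mathcomp Require Import zify.

(* In Model B the two dictionary words differ, apart from noise, in the first
   coordinate of each of the c = d/l blocks.  A block on which all three noise
   vectors vanish votes for class 1 with certainty, so [w] can only be
   misclassified when at least c/2 blocks are hit by noise.  The number of hit
   blocks is at most the number T of nonzero noise coordinates, so the
   misclassification probability given the noise is at most 2T/c, whose
   expectation is 2 * 3dp / c = 6lp -> 0. *)

Set Implicit Arguments.
Unset Strict Implicit.
Unset Printing Implicit Defensive.

Lemma Rmult0m : left_zero 0%R Rmult. Proof. exact: Rmult_0_l. Qed.
Lemma Rmultm0 : right_zero 0%R Rmult. Proof. exact: Rmult_0_r. Qed.
HB.instance Definition _ := Monoid.isMulLaw.Build R 0%R Rmult Rmult0m Rmultm0.
Lemma RmultDl : left_distributive Rmult Rplus. Proof. exact: Rmult_plus_distr_r. Qed.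
Lemma RmultDr : right_distributive Rmult Rplus. Proof. exact: Rmult_plus_distr_l. Qed.
HB.instance Definition _ := Monoid.isAddLaw.Build R Rmult Rplus RmultDl RmultDr.

Lemma Rsum_le (I : Type) (r : seq I) (P : pred I) (F G : I -> R) :
  (forall i, P i -> (F i <= G i)%R) ->
  (\big[Rplus/0%R]_(i <- r | P i) F i <= \big[Rplus/0%R]_(i <- r | P i) G i)%R.
Proof. by move=> FG; elim/big_ind2: _ => // *; lra. Qed.

Lemma Rsum_ge0 (I : Type) (r : seq I) (P : pred I) (F : I -> R) :
  (forall i, P i -> (0 <= F i)%R) -> (0 <= \big[Rplus/0%R]_(i <- r | P i) F i)%R.
Proof. by move=> F0; elim/big_ind: _ => // *; lra. Qed.

Lemma Rprod_ge0 (I : Type) (r : seq I) (P : pred I) (F : I -> R) :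
  (forall i, P i -> (0 <= F i)%R) -> (0 <= \big[Rmult/1%R]_(i <- r | P i) F i)%R.
Proof. by move=> F0; elim/big_ind: _ => //; [lra | exact: Rmult_le_pos]. Qed.

Lemma Rprod_le1 (I : Type) (r : seq I) (P : pred I) (F : I -> R) :
  (forall i, P i -> (0 <= F i <= 1)%R) -> (\big[Rmult/1%R]_(i <- r | P i) F i <= 1)%R.
Proof.
move=> F01; suff [] : (0 <= \big[Rmult/1%R]_(i <- r | P i) F i <= 1)%R by [].
elim/big_ind: _ => //; first lra.
move=> x y hx hy; split; first by apply: Rmult_le_pos; lra.
by rewrite -(Rmult_1_r 1); apply: Rmult_le_compat; lra.
Qed.

Lemma iter_Rplus n (x : R) : iter n (Rplus x) 0%R = (INR n * x)%R.
Proof.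
elim: n => [|n IHn]; first by rewrite Rmult_0_l.
by rewrite iterS IHn S_INR; ring.
Qed.

Lemma Rinv_INR_ge0 n : (0 <= / INR n)%R.
Proof.
case: n => [|n]; first by rewrite Rinv_0; lra.
by apply/Rlt_le/Rinv_0_lt_compat/lt_0_INR; lia.
Qed.

Lemma Rsum_inv_card_le1 (I : finType) (A : {pred I}) :
  (\big[Rplus/0%R]_(i in A) / INR #|A| <= 1)%R.
Proof.
rewrite big_const iter_Rplus; case: #|A| => [|n]; first by rewrite Rmult_0_l; lra.
by rewrite Rinv_r; [lra | apply: not_0_INR].
Qed.

Section SegmentationRule.
Variables (d c K : nat) (ws : 'I_K -> 'I_d -> R) (w : 'I_d -> R).

Lemma prob_U_ge0 (u : {ffun 'I_c -> 'I_K}) : (0 <= prob_U ws w u)%R.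
Proof. by apply: Rprod_ge0 => j _; case: ifP => _; [exact: Rinv_INR_ge0 | lra]. Qed.

Lemma sum_prob_U_le1 : (\big[Rplus/0%R]_(u : {ffun 'I_c -> 'I_K}) prob_U ws w u <= 1)%R.
Proof.
rewrite /prob_U -(bigA_distr_bigA (fun (j : 'I_c) (k : 'I_K) =>
   if k \in block_minimizers c ws w j
   then / INR #|block_minimizers c ws w j| else 0)%R).
apply: Rprod_le1 => j _; rewrite -big_mkcond; split; last exact: Rsum_inv_card_le1.
by apply: Rsum_ge0 => k _; exact: Rinv_INR_ge0.
Qed.

Lemma prob_U_neq0_minimizers {u : {ffun 'I_c -> 'I_K}} : prob_U ws w u <> 0%R ->
  forall j, u j \in block_minimizers c ws w j.
Proof.
move=> U0 j; apply/negPn/negP => /negbTE ujN; apply: U0.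
by rewrite /prob_U (bigD1 j) //= ujN Rmult_0_l.
Qed.

Lemma prob_chi_given_ge0 (u : {ffun 'I_c -> 'I_K}) k : (0 <= prob_chi_given u k)%R.
Proof. by rewrite /prob_chi_given; case: ifP => _; [exact: Rinv_INR_ge0 | lra]. Qed.

Lemma sum_prob_chi_given_le1 (u : {ffun 'I_c -> 'I_K}) (P : pred 'I_K) :
  (\big[Rplus/0%R]_(k | P k) prob_chi_given u k <= 1)%R.
Proof.
apply: Rle_trans (_ : \big[Rplus/0%R]_k prob_chi_given u k <= 1)%R.
  rewrite [X in (_ <= X)%R](bigID P) /= -[X in (X <= _)%R]Rplus_0_r.
  by apply/Rplus_le_compat_l/Rsum_ge0 => k _; exact: prob_chi_given_ge0.
by rewrite /prob_chi_given -big_mkcond; exact: Rsum_inv_card_le1.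
Qed.

Lemma seg_misclass_prob_ge0 k0 : (0 <= seg_misclass_prob c ws w k0)%R.
Proof.
apply: Rsum_ge0 => u _; apply: Rmult_le_pos; first exact: prob_U_ge0.
by apply: Rsum_ge0 => k _; exact: prob_chi_given_ge0.
Qed.

Lemma seg_misclass_prob_le1 k0 : (seg_misclass_prob c ws w k0 <= 1)%R.
Proof.
apply: Rle_trans sum_prob_U_le1; apply: Rsum_le => u _.
rewrite -[X in (_ <= X)%R]Rmult_1_r; apply: Rmult_le_compat_l.
  exact: prob_U_ge0.
exact: sum_prob_chi_given_le1.
Qed.

Section CorrectOutsideBadBlocks.
Variables (k0 : 'I_K) (B : {set 'I_c}).
Hypothesis only_k0_outside :
  forall j, j \notin B -> forall k, k != k0 -> k \notin block_minimizers c ws w j.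

Lemma votes_ge_outside (u : {ffun 'I_c -> 'I_K}) :
  (forall j, u j \in block_minimizers c ws w j) -> c - #|B| <= votes u k0.
Proof.
move=> umin; have := cardsC B; rewrite card_ord.
suff : #|~: B| <= votes u k0 by lia.
apply: subset_leq_card; apply/subsetP => j; rewrite in_setC => jB; rewrite inE.
by apply/negPn/negP => ujk0; have := only_k0_outside jB ujk0; rewrite umin.
Qed.

Lemma votes_le_outside (u : {ffun 'I_c -> 'I_K}) k :
  (forall j, u j \in block_minimizers c ws w j) -> k != k0 -> votes u k <= #|B|.
Proof.
move=> umin kk0; apply: subset_leq_card; apply/subsetP => j; rewrite inE => /eqP ujk.
by apply/negPn/negP => jB; have := only_k0_outside jB kk0; rewrite -ujk umin.
Qed.

(* A majority of blocks vote for [k0] with certainty, so no tie-break can go wrong. *)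
Lemma seg_misclass_prob_eq0 : #|B|.*2 < c -> seg_misclass_prob c ws w k0 = 0%R.
Proof.
move=> Bsmall; apply: big1 => u _.
have [->|U0] := Req_dec (prob_U ws w u) 0%R; first by rewrite Rmult_0_l.
have umin := prob_U_neq0_minimizers U0.
rewrite big1 ?Rmult_0_r // => k kk0; rewrite /prob_chi_given inE.
case: forallP => // /(_ k0) maxk; exfalso.
by have := votes_ge_outside umin; have := votes_le_outside umin kk0; lia.
Qed.

Lemma seg_misclass_prob_le_bad :
  0 < c -> (seg_misclass_prob c ws w k0 <= 2 * INR #|B| / INR c)%R.
Proof.
move=> c_gt0; have cR : (0 < INR c)%R by apply: lt_0_INR; lia.
have bound_ge0 : (0 <= 2 * INR #|B| / INR c)%R.
  by apply: Rle_mult_inv_pos => //; have := pos_INR #|B|; lra.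
case: (ltnP #|B|.*2 c) => [Bsmall | Blarge]; first by rewrite seg_misclass_prob_eq0.
apply: Rle_trans (seg_misclass_prob_le1 k0) _.
have cB : (INR c <= 2 * INR #|B|)%R.
  by rewrite -[2%R]/(INR 2) -mult_INR; apply: le_INR; lia.
by apply: (Rmult_le_reg_r (INR c)) => //; rewrite Rmult_1_l /Rdiv Rmult_assoc Rinv_l; lra.
Qed.

End CorrectOutsideBadBlocks.
End SegmentationRule.

Definition Rind (d : nat) (b : {ffun 'I_d -> bool}) (i : 'I_d) : R :=
  if b i then 1%R else 0%R.

Definition nb_ones (d : nat) (b : {ffun 'I_d -> bool}) : R :=
  \big[Rplus/0%R]_(i : 'I_d) Rind b i.

Definition Ebern (d : nat) (p : R) (f : {ffun 'I_d -> bool} -> R) : R :=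
  \big[Rplus/0%R]_(b : {ffun 'I_d -> bool}) (Yweight p b * f b)%R.

Section BernoulliExpectation.
Variables (d : nat) (p : R).
Implicit Types f g : {ffun 'I_d -> bool} -> R.

Lemma sum_Yweight : \big[Rplus/0%R]_(b : {ffun 'I_d -> bool}) Yweight p b = 1%R.
Proof.
rewrite /Yweight -(bigA_distr_bigA (fun _ (x : bool) => if x then p else 1 - p)%R).
by rewrite big1 // => i _; rewrite big_bool /=; ring.
Qed.

Lemma Yweight_ge0 (b : {ffun 'I_d -> bool}) : (0 <= p <= 1)%R -> (0 <= Yweight p b)%R.
Proof. by move=> p01; apply: Rprod_ge0 => i _; case: (b i); lra. Qed.

Lemma Ebern_le f g : (0 <= p <= 1)%R ->
  (forall b, f b <= g b)%R -> (Ebern p f <= Ebern p g)%R.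
Proof.
move=> p01 fg; apply: Rsum_le => b _.
by apply: Rmult_le_compat_l; [exact: Yweight_ge0 | exact: fg].
Qed.

Lemma Ebern_ge0 f : (0 <= p <= 1)%R -> (forall b, 0 <= f b)%R -> (0 <= Ebern p f)%R.
Proof.
move=> p01 f_ge0; apply: Rsum_ge0 => b _.
by apply: Rmult_le_pos; [exact: Yweight_ge0 | exact: f_ge0].
Qed.

Lemma Ebern_ext f g : (forall b, f b = g b) -> Ebern p f = Ebern p g.
Proof. by move=> fg; apply: eq_bigr => b _; rewrite fg. Qed.

Lemma EbernD f g : Ebern p (fun b => f b + g b)%R = (Ebern p f + Ebern p g)%R.
Proof. by rewrite /Ebern -big_split; apply: eq_bigr => b _ /=; ring. Qed.

Lemma EbernZ a f : Ebern p (fun b => a * f b)%R = (a * Ebern p f)%R.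
Proof. by rewrite /Ebern big_distrr; apply: eq_bigr => b _ /=; ring. Qed.

Lemma Ebern_cst a : Ebern p (fun _ : {ffun 'I_d -> bool} => a) = a.
Proof. by rewrite /Ebern -big_distrl /= sum_Yweight Rmult_1_l. Qed.

Lemma Ebern_sum (F : 'I_d -> {ffun 'I_d -> bool} -> R) :
  Ebern p (fun b => \big[Rplus/0%R]_i F i b) = \big[Rplus/0%R]_i Ebern p (F i).
Proof.
rewrite /Ebern -exchange_big; apply: eq_bigr => b _.
by rewrite big_distrr.
Qed.

Lemma Ebern_Rind (i : 'I_d) : Ebern p (fun b => Rind b i) = p.
Proof.
pose G (k : 'I_d) (x : bool) :=
  ((if x then p else 1 - p) * (if k == i then (if x then 1 else 0) else 1))%R.
transitivity (\big[Rplus/0%R]_(b : {ffun 'I_d -> bool}) \big[Rmult/1%R]_k G k (b k)).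
  apply: eq_bigr => b _; rewrite /G big_split /=; congr Rmult.
  by rewrite (bigD1 i) //= eqxx big1 ?Rmult_1_r // => k /negbTE ->.
rewrite -(bigA_distr_bigA G) (bigD1 i) //= [X in (_ * X)%R]big1.
  by rewrite /G big_bool eqxx /=; ring.
by move=> k /negbTE ki; rewrite /G big_bool ki /=; ring.
Qed.

Lemma Ebern_nb_ones : Ebern p (@nb_ones d) = (INR d * p)%R.
Proof.
rewrite Ebern_sum (eq_bigr (fun _ => p)) => [|i _]; last exact: Ebern_Rind.
by rewrite big_const_ord iter_Rplus.
Qed.

End BernoulliExpectation.

Section ModelBBlocks.
Variables (d l : nat) (N : R) (b0 b1 b2 : {ffun 'I_d -> bool}).
Hypotheses (d_gt0 : 0 < d) (l_gt0 : 0 < l) (l_dvd : l %| d).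

Let c := d %/ l.
Let ws (k : 'I_2) : 'I_d -> R :=
  if k == class1 then Yvec N b1 else (fun i => m2 l i + Yvec N b2 i)%R.
Let w := Yvec N b0.

Lemma nb_blocks_gt0 : 0 < c.
Proof. by rewrite divn_gt0 // dvdn_leq. Qed.

Lemma block_size : d %/ c = l.
Proof. by rewrite -{1}(divnK l_dvd) mulKn // nb_blocks_gt0. Qed.

Definition dirty_blocks : {set 'I_c} :=
  [set j : 'I_c | [exists i : 'I_d, (i %/ l == j) && [|| b0 i, b1 i | b2 i]]].

(* On a block where all three noise vectors vanish, [w] and [w^1] agree, while
   [w^2] carries the coordinate [m_2 = 1] at the first position of the block. *)
Lemma clean_block_minimizer (j : 'I_c) : j \notin dirty_blocks ->
  forall k, k != class1 -> k \notin block_minimizers c ws w j.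
Proof.
rewrite inE negb_exists => /forallP clean k k1.
have {k1} -> : k = class2 by case: k k1 => [[|[|m]] km] //= _; exact/val_inj.
rewrite inE negb_forall; apply/existsP; exists class1.
have noise0 (i : 'I_d) : i %/ l == j -> [/\ b0 i = false, b1 i = false & b2 i = false].
  by move=> ij; move: (clean i); rewrite ij /= => /norP [/negbTE -> /norP [/negbTE -> /negbTE ->]].
have -> : block_dist c w (ws class1) j = 0%R.
  rewrite /block_dist block_size big1 ?sqrt_0 // => i /noise0 [z0 z1 _].
  by rewrite /w /ws /= /Yvec z0 z1; ring.
have jl_lt : j * l < d by rewrite -(divnK l_dvd) ltn_pmul2r.
pose i0 := Ordinal jl_lt.
have i0j : i0 %/ l == j by rewrite /= mulnK.
have [z0 _ z2] := noise0 i0 i0j.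
rewrite /Rleb /block_dist block_size; set S := \big[Rplus/0%R]_(i | _) _.
have S_ge1 : (1 <= S)%R.
  have gap : (w i0 - ws class2 i0 = -1)%R.
    by rewrite /ws /= /w /Yvec /m2 z0 z2 modnMl eqxx; ring.
  rewrite /S (bigD1 i0) // gap; set rest := \big[Rplus/0%R]_(i | _ && _) _.
  have : (0 <= rest)%R by apply: Rsum_ge0 => i _; exact: pow2_ge_0.
  by rewrite /=; lra.
case: Rle_dec => // le_S0.
by have := sqrt_lt_R0 S ltac:(lra); lra.
Qed.

Lemma card_dirty_blocks_le :
  (INR #|dirty_blocks| <= nb_ones b0 + nb_ones b1 + nb_ones b2)%R.
Proof.
pose noisy := [set i : 'I_d | [|| b0 i, b1 i | b2 i]].
pose block_of (i : 'I_d) : 'I_c := insubd (Ordinal nb_blocks_gt0) (i %/ l).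
have dirty_img : dirty_blocks \subset block_of @: noisy.
  apply/subsetP => j; rewrite inE => /existsP [i /andP [/eqP ij bi]].
  apply/imsetP; exists i; first by rewrite inE.
  by apply: val_inj; rewrite /block_of val_insubd ij ltn_ord.
apply: Rle_trans (_ : INR #|noisy| <= _)%R.
  by apply/le_INR/leP; exact: leq_trans (subset_leq_card dirty_img) (leq_imset_card _ _).
rewrite /nb_ones -!big_split /= -[INR _]Rmult_1_r -iter_Rplus -big_const big_mkcond.
by apply: Rsum_le => i _; rewrite inE /Rind; case: (b0 i) (b1 i) (b2 i) => [] [] [] /=; lra.
Qed.

Lemma modelB_seg_misclass_le : (seg_misclass_prob c ws w class1 <=
  2 / INR c * (nb_ones b0 + nb_ones b1 + nb_ones b2))%R.
Proof.
have cR : (0 < INR c)%R by apply/lt_0_INR/ltP; exact: nb_blocks_gt0.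
apply: Rle_trans (seg_misclass_prob_le_bad clean_block_minimizer nb_blocks_gt0) _.
have := card_dirty_blocks_le; set T := (_ + _ + _)%R => dirty_le.
rewrite /Rdiv; replace (2 * / INR c * T)%R with (2 * T * / INR c)%R by ring.
by apply: Rmult_le_compat_r; [exact/Rlt_le/Rinv_0_lt_compat | lra].
Qed.

End ModelBBlocks.

Lemma big_Yweight3 d p (F : {ffun 'I_d -> bool} -> {ffun 'I_d -> bool} -> {ffun 'I_d -> bool} -> R) :
  \big[Rplus/0%R]_b0 \big[Rplus/0%R]_b1 \big[Rplus/0%R]_b2
    (Yweight p b0 * Yweight p b1 * Yweight p b2 * F b0 b1 b2)%R =
  Ebern p (fun b0 => Ebern p (fun b1 => Ebern p (fun b2 => F b0 b1 b2))).
Proof.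
apply: eq_bigr => b0 _; rewrite big_distrr; apply: eq_bigr => b1 _.
by rewrite !big_distrr; apply: eq_bigr => b2 _ /=; ring.
Qed.

Lemma Ebern3_nb_ones d p (K : R) :
  Ebern p (fun b0 : {ffun 'I_d -> bool} => Ebern p (fun b1 : {ffun 'I_d -> bool} =>
    Ebern p (fun b2 : {ffun 'I_d -> bool} =>
    K * (nb_ones b0 + nb_ones b1 + nb_ones b2))%R)) = (3 * K * (INR d * p))%R.
Proof.
have affine a K' (f : {ffun 'I_d -> bool} -> R) : (forall b, f b = a + K' * nb_ones b)%R ->
    Ebern p f = (a + K' * (INR d * p))%R.
  by move=> fE; rewrite (Ebern_ext _ fE) EbernD Ebern_cst EbernZ Ebern_nb_ones.
rewrite (affine (2 * K * (INR d * p)) K)%R => [|b0]; first ring.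
rewrite (affine (K * nb_ones b0 + K * (INR d * p)) K)%R => [|b1]; first ring.
by rewrite (affine (K * (nb_ones b0 + nb_ones b1)) K)%R => [|b2]; ring.
Qed.

Lemma modelB_misclass_prob_bounds d l N p :
  0 < d -> 0 < l -> l %| d -> (0 <= p <= 1)%R ->
  (0 <= modelB_misclass_prob d l N p <= 6 * (INR l * p))%R.
Proof.
move=> d_gt0 l_gt0 l_dvd p01; rewrite /modelB_misclass_prob big_Yweight3.
have cR : (0 < INR (d %/ l))%R by apply/lt_0_INR/ltP; exact: nb_blocks_gt0.
split.
  by do 3![apply: Ebern_ge0 => // ? ]; exact: seg_misclass_prob_ge0.
pose bound := Ebern p (fun b0 : {ffun 'I_d -> bool} =>
  Ebern p (fun b1 : {ffun 'I_d -> bool} => Ebern p (fun b2 : {ffun 'I_d -> bool} =>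
    2 / INR (d %/ l) * (nb_ones b0 + nb_ones b1 + nb_ones b2))))%R.
apply: (Rle_trans _ bound).
  by do 3![apply: Ebern_le => // ? ]; exact: modelB_seg_misclass_le.
have dE : INR d = (INR (d %/ l) * INR l)%R by rewrite -mult_INR; congr INR; exact/esym/divnK.
by rewrite /bound Ebern3_nb_ones dE; right; field; lra.
Qed.

Theorem proposition4
  (d l : nat -> nat) (N p : nat -> R)
  (hd_pos : forall n, 0 < d n)
  (hd_inf : forall M : nat, exists n0, forall n, n0 <= n -> M <= d n)
  (hl_pos : forall n, 0 < l n)
  (hl_dvd : forall n, l n %| d n)
  (hN : forall n, (0 < N n)%R)
  (hp : forall n, (0 < p n < 1)%R)
  (hl_inf : forall M : nat, exists n0, forall n, n0 <= n -> M <= l n)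
  (hlp : Un_cv (fun n => INR (l n) * p n)%R 0%R) :
  Un_cv (fun n => modelB_misclass_prob (d n) (l n) (N n) (p n)) 0%R.
Proof.
move=> eps eps_gt0; have [n0 lp_small] := hlp (eps / 6)%R ltac:(lra).
exists n0 => n n_ge; have := lp_small n n_ge; rewrite /R_dist !Rminus_0_r.
have p01 : (0 <= p n <= 1)%R by have := hp n; lra.
have lp_ge0 : (0 <= INR (l n) * p n)%R by apply: Rmult_le_pos; [exact: pos_INR | lra].
have [err_ge0 err_le] :=
  modelB_misclass_prob_bounds (N n) (hd_pos n) (hl_pos n) (hl_dvd n) p01.
by rewrite !Rabs_pos_eq //; lra.
Qed.
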